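(* Let $\tfrac12 H_{24}$ denote the halved $24$-cube (defined below). For each integer $c\in\{3,6,8,9,11,12\}\cup\{14,15,16,\dots,128\}$ there exists a set $C\subset V(\tfrac12 H_{24})$ whose characteristic function $\chi_C$ is a perfect coloring of $\tfrac12 H_{24}$ with parameters $((20+c,\,256-c)(c,\,276-c))$.
   Context: $E^n$ is the set of binary words of length $n$; the (Hamming) distance between two words is the number of positions where they differ, and the weight of a word is its number of ones. The halved $24$-cube $\tfrac12 H_{24}$ is the graph whose vertices are the even-weight words of $E^{24}$, two of them adjacent iff they are at Hamming distance exactly $2$ (it is regular of degree $276$; the analogous graph on odd-weight words is isomorphic to it). For a graph $G$ and a set $C$ with $\emptyset\neq C\subsetneq V(G)$, the characteristic function $\chi_C$ is a perfect coloring with parameters $((a,b)(c,d))$ if every vertex of $C$ has exactly $a$ neighbours in $C$ and exactly $b$ neighbours outside $C$, and every vertex outside $C$ has exactly $c$ neighbours in $C$ and exactly $d$ neighbours outside $C$. *)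

From mathcomp Require Import all_boot.
Set Implicit Arguments. Unset Strict Implicit. Unset Printing Implicit Defensive.

Definition word (n : nat) := {ffun 'I_n -> bool}.

Definition weight n (w : word n) : nat := #|[set i | w i]|.

Definition hdist n (u v : word n) : nat := #|[set i | u i != v i]|.

Definition halved_vertex (n : nat) := {w : word n | ~~ odd (weight w)}.

Definition halved_adj n (x y : halved_vertex n) : bool := hdist (val x) (val y) == 2.

Definition perfect_coloring (V : finType) (adj : rel V) (C : {set V})
    (a b c d : nat) : Prop :=
  set0 != C /\ C != [set: V] /\
  (forall x, x \in C ->
     #|[set y | adj x y & y \in C]| = a /\ #|[set y | adj x y & y \notin C]| = b) /\
  (forall x, x \notin C ->
     #|[set y | adj x y & y \in C]| = c /\ #|[set y | adj x y & y \notin C]| = d).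

(* The proof passes to a quotient of the halved cube.  Fix vectors
   col_0, ..., col_(n-1) of F_2^m (encoded as binary numbers below 2^m) and
   let the syndrome of a word w be the sum of the col_k with w_k = 1.  The
   neighbours of x are the words x + e_i + e_j (i < j), of syndrome
   s(x) + col_i + col_j, so for any set S of syndromes the number of neighbours of x in s^-1(S) is the
   number of pairs i < j with s(x) + col_i + col_j in S.  Call S
   (lambda, c)-perfect when this pair count is lambda + c inside S and c
   outside S; then s^-1(S) is a perfect coloring of the halved n-cube with
   parameters ((lambda + c, N - lambda - c)(c, N - c)), N = n(n-1)/2.
   Perfectness is preserved by translation, and a disjoint union of
   (lambda, c_i)-perfect sets is (lambda, sum c_i)-perfect.

   For n = 24 and m = 11 we use 24 columns for which the column set T is
   (20, 3)-perfect and the subspace H = [0, 64) is (20, 8)-perfect (checked by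
   computation).  Eight translates of T and fifteen translates of H are
   pairwise disjoint, and every admissible c is 3a + 8b with a <= 8, b <= 15,
   which gives the theorem.  The file treats in turn the neighbourhoods in
   the halved cube, the space F_2^m, perfect syndrome sets, and the concrete
   data for n = 24. *)

From Stdlib Require Import NArith Lia.
From HB Require Import structures.
From mathcomp Require Import all_boot.
Set Implicit Arguments. Unset Strict Implicit. Unset Printing Implicit Defensive.

Section Words.
Variable n : nat.

Definition wadd (u d : word n) : word n := [ffun i => u i (+) d i].
Definition pair_word (i j : 'I_n) : word n := [ffun k => (k == i) || (k == j)].

Lemma waddK (u : word n) : involutive (wadd u).
Proof. by move=> d; apply/ffunP => i; rewrite !ffunE; case: (u i); case: (d i). Qed.

Lemma hdist_wadd (u d : word n) : hdist u (wadd u d) = weight d.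
Proof.
rewrite /hdist /weight; apply: eq_card => i; rewrite !inE ffunE.
by case: (u i); case: (d i).
Qed.

Lemma odd_weight (w : word n) : odd (weight w) = \big[addb/false]_(i < n) w i.
Proof.
rewrite /weight -sum1_card big_mkcond /=.
rewrite (big_morph odd oddD (erefl : odd 0 = false)).
by apply: eq_bigr => i _; rewrite inE; case: (w i).
Qed.

Lemma odd_weight_hdist (u v : word n) :
  odd (weight v) = odd (weight u) (+) odd (hdist u v).
Proof.
have -> : v = wadd u (wadd u v) by rewrite waddK.
rewrite hdist_wadd !odd_weight -big_split /=.
by apply: eq_bigr => i _; rewrite !ffunE; case: (u i); case: (v i).
Qed.

Lemma card_neighbours_words (x : halved_vertex n) (Q : word n -> bool) :
  #|[set y | halved_adj x y & Q (val y)]| =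
  #|[set w : word n | (hdist (val x) w == 2) && Q w]|.
Proof.
have -> : [set w : word n | (hdist (val x) w == 2) && Q w] =
          val @: [set y | halved_adj x y & Q (val y)].
  apply/setP => w; rewrite inE; apply/idP/imsetP.
  - move=> /andP [d2 Qw].
    have ev : ~~ odd (weight w).
      by rewrite (odd_weight_hdist (val x)) (eqP d2) addbF; exact: (valP x).
    by exists (exist _ w ev) => //; rewrite inE /halved_adj /= d2 Qw.
  - by case=> y; rewrite inE /halved_adj => /andP [d2 Qy] ->; rewrite d2.
by rewrite card_imset //; exact: val_inj.
Qed.

Lemma card_hdist2 (x : word n) (Q : word n -> bool) :
  #|[set w : word n | (hdist x w == 2) && Q w]| =
  #|[set d : word n | (weight d == 2) && Q (wadd x d)]|.
Proof.
have -> : [set d : word n | (weight d == 2) && Q (wadd x d)] =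
          wadd x @^-1: [set w : word n | (hdist x w == 2) && Q w].
  by apply/setP => d; rewrite !inE hdist_wadd.
by rewrite card_preimset //; apply: inv_inj; exact: waddK.
Qed.

Lemma weight_pair_word (i j : 'I_n) : i != j -> weight (pair_word i j) = 2.
Proof.
move=> ij; rewrite /weight (_ : [set k | _] = [set i; j]) ?cards2 ?ij //.
by apply/setP => k; rewrite !inE ffunE.
Qed.

Lemma card_weight2 (Q : word n -> bool) :
  #|[set d : word n | (weight d == 2) && Q d]| =
  #|[set p : 'I_n * 'I_n | (p.1 < p.2) && Q (pair_word p.1 p.2)]|.
Proof.
have -> : [set d : word n | (weight d == 2) && Q d] =
          (fun p : 'I_n * 'I_n => pair_word p.1 p.2) @:
            [set p : 'I_n * 'I_n | (p.1 < p.2) && Q (pair_word p.1 p.2)].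
  apply/setP => d; rewrite inE; apply/idP/imsetP.
  - move=> /andP [/cards2P [a [b [ab Ed]]] Qd].
    have [lt_ab | lt_ba] : a < b \/ b < a.
      by move: ab; rewrite neq_ltn => /orP [] ?; [left | right].
    + have de : d = pair_word a b.
        by apply/ffunP => k; move/setP: Ed => /(_ k); rewrite ffunE !inE.
      by exists (a, b) => //; rewrite inE /= lt_ab -de Qd.
    + have de : d = pair_word b a.
        by apply/ffunP => k; move/setP: Ed => /(_ k); rewrite ffunE !inE orbC.
      by exists (b, a) => //; rewrite inE /= lt_ba -de Qd.
  - case=> p; rewrite inE => /andP [lt Qp] ->.
    by rewrite Qp weight_pair_word // neq_ltn lt.
rewrite card_in_imset // => [[a b] [a' b']]; rewrite !inE /= => /andP [lab _] /andP [lab' _] E.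
have := congr1 (fun w : word n => w a) E; have := congr1 (fun w : word n => w b) E.
rewrite /= !ffunE !eqxx ?orbT /= => /esym/orP [] /eqP eb /esym/orP [] /eqP ea;
  subst; rewrite ?ltnn // in lab lab' *.
by have := ltn_trans lab lab'; rewrite ltnn.
Qed.

Lemma card_neighbours (x : halved_vertex n) (Q : word n -> bool) :
  #|[set y | halved_adj x y & Q (val y)]| =
  #|[set p : 'I_n * 'I_n | (p.1 < p.2) && Q (wadd (val x) (pair_word p.1 p.2))]|.
Proof. by rewrite card_neighbours_words card_hdist2 card_weight2. Qed.

End Words.

Definition pairs (n : nat) : seq (nat * nat) :=
  filter (fun ij => ij.1 < ij.2)
    (flatten [seq [seq (i, j) | j <- iota 0 n] | i <- iota 0 n]).

Lemma card_pairs n (f : nat -> nat -> bool) :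
  #|[set p : 'I_n * 'I_n | (p.1 < p.2) && f p.1 p.2]| =
  count (fun ij => f ij.1 ij.2) (pairs n).
Proof.
transitivity (\sum_(p : 'I_n * 'I_n) ((p.1 < p.2) && f p.1 p.2 : nat)).
  by rewrite -sum1_card big_mkcond /=; apply: eq_bigr => p _; rewrite inE; case: (_ && _).
rewrite -(pair_big xpredT xpredT (fun i j : 'I_n => ((i < j) && f i j : nat))).
rewrite /pairs count_filter count_flatten -map_comp sumnE big_map.
rewrite -(@big_mkord _ 0 addn n xpredT (fun i => \sum_(j < n) ((i < j) && f i j : nat))).
rewrite /index_iota subn0; apply: eq_bigr => i _; rewrite /comp.
rewrite -(@big_mkord _ 0 addn n xpredT (fun j => ((i < j) && f i j : nat))) count_map -sum1_count.
rewrite [RHS]big_mkcond /index_iota subn0.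
by apply: eq_bigr => j _ /=; rewrite andbC; case: (_ && _).
Qed.

(* s encodes a vector of F_2^m: it has no bit at position m or above. *)
Definition bounded (m : nat) (s : N) : Prop := N.shiftr s (N.of_nat m) = 0%num.

Lemma bounded_lxor m a b : bounded m a -> bounded m b -> bounded m (N.lxor a b).
Proof. by rewrite /bounded => ha hb; rewrite N.shiftr_lxor ha hb. Qed.

Lemma bounded_lt m s : bounded m s -> N.lt s (N.of_nat (Nat.pow 2 m)).
Proof.
rewrite /bounded N.shiftr_div_pow2 Nat2N.inj_pow => h.
by apply N.div_small_iff in h; [exact: h | apply N.pow_nonzero].
Qed.

Lemma lt_bounded m s : N.lt s (N.of_nat (Nat.pow 2 m)) -> bounded m s.
Proof. by rewrite /bounded N.shiftr_div_pow2 Nat2N.inj_pow => h; apply N.div_small. Qed.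

Fixpoint all_from (f : N -> bool) (k : nat) (a : N) : bool :=
  if k is k'.+1 then f a && all_from f k' (N.succ a) else true.

Lemma all_fromP f k a : all_from f k a ->
  forall s, N.le a s -> N.lt s (a + N.of_nat k) -> f s.
Proof.
elim: k a => [|k IH] a /=; first by move=> _ s h1 h2; lia.
move=> /andP [fa rest] s h1 h2.
have [<- // | ne] := N.eq_dec a s.
by apply: (IH _ rest); lia.
Qed.

Definition all_vectors (m : nat) (f : N -> bool) : bool := all_from f (Nat.pow 2 m) 0.

Lemma all_vectorsP m f : all_vectors m f -> forall s, bounded m s -> f s.
Proof. by move=> h s /bounded_lt hs; apply: (all_fromP h); lia. Qed.

Lemma lxorA : associative N.lxor.
Proof. by move=> a b c; rewrite N.lxor_assoc. Qed.
HB.instance Definition _ := Monoid.isComLaw.Build N 0%num N.lxor lxorA N.lxor_comm N.lxor_0_l.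

Section PerfectSyndromeSets.
Variables (m n : nat) (col : nat -> N).
Hypothesis col_bounded : forall k, bounded m (col k).

Definition syndrome (w : word n) : N :=
  \big[N.lxor/0%num]_(k < n) (if w k then col k else 0%num).

Lemma syndrome_bounded w : bounded m (syndrome w).
Proof.
apply: (big_ind (bounded m)) => [|a b|k _]; first exact: N.shiftr_0_l.
  exact: bounded_lxor.
by case: (w k); [exact: col_bounded | exact: N.shiftr_0_l].
Qed.

Lemma syndrome_wadd u d : syndrome (wadd u d) = N.lxor (syndrome u) (syndrome d).
Proof.
rewrite /syndrome -big_split /=; apply: eq_bigr => k _; rewrite ffunE.
by case: (u k); case: (d k); rewrite ?N.lxor_nilpotent ?N.lxor_0_l ?N.lxor_0_r.
Qed.

Lemma syndrome_pair_word (i j : 'I_n) :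
  i != j -> syndrome (pair_word i j) = N.lxor (col i) (col j).
Proof.
move=> ij; rewrite /syndrome (bigD1 i) //= ffunE eqxx /=.
rewrite (bigD1 j) /=; last by rewrite eq_sym.
rewrite ffunE eqxx orbT big1 ?N.lxor_0_r // => k /andP [kj ki].
by rewrite ffunE (negbTE ki) (negbTE kj).
Qed.

Definition pair_count (P : N -> bool) (s : N) : nat :=
  count (fun ij => P (N.lxor (N.lxor s (col ij.1)) (col ij.2))) (pairs n).

Lemma card_neighbours_syndrome (x : halved_vertex n) (P : N -> bool) :
  #|[set y | halved_adj x y & P (syndrome (val y))]| = pair_count P (syndrome (val x)).
Proof.
rewrite (card_neighbours x (fun w => P (syndrome w))) /pair_count.
rewrite -(card_pairs n (fun i j => P (N.lxor (N.lxor (syndrome (val x)) (col i)) (col j)))).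
apply: eq_card => p; rewrite !inE; case lt: (p.1 < p.2) => //=.
by rewrite syndrome_wadd syndrome_pair_word ?N.lxor_assoc // neq_ltn lt.
Qed.

Lemma pair_count_compl P s :
  pair_count (fun t => ~~ P t) s = size (pairs n) - pair_count P s.
Proof.
rewrite /pair_count.
by rewrite -(count_predC (fun ij => P (N.lxor (N.lxor s (col ij.1)) (col ij.2))) (pairs n)) addKn.
Qed.

Definition perfect (lambda : nat) (P : N -> bool) (c : nat) : Prop :=
  forall s, bounded m s -> pair_count P s = (if P s then lambda + c else c).

Definition translate (P : N -> bool) (t : N) : N -> bool := fun s => P (N.lxor s t).

Lemma perfect_translate lambda P c t :
  perfect lambda P c -> bounded m t -> perfect lambda (translate P t) c.
Proof.
move=> perfP bt s bs.
have -> : pair_count (translate P t) s = pair_count P (N.lxor s t).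
  apply: eq_count => ij; rewrite /translate /= !N.lxor_assoc; congr (P (N.lxor s _)).
  by rewrite [RHS]N.lxor_comm N.lxor_assoc.
exact/perfP/bounded_lxor.
Qed.

Definition disjoint_on (P Q : N -> bool) : Prop :=
  forall s, bounded m s -> ~~ (P s && Q s).

Lemma pair_count_union P Q s : bounded m s -> disjoint_on P Q ->
  pair_count (fun t => P t || Q t) s = pair_count P s + pair_count Q s.
Proof.
move=> bs dPQ; rewrite /pair_count -count_predUI.
set A := fun ij : nat * nat => P (N.lxor (N.lxor s (col ij.1)) (col ij.2)).
set B := fun ij : nat * nat => Q (N.lxor (N.lxor s (col ij.1)) (col ij.2)).
rewrite (@eq_count _ (predI A B) pred0) ?count_pred0 ?addn0 // => ij.
by apply/negbTE/dPQ/bounded_lxor => //; exact: bounded_lxor.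
Qed.

Definition union_of (piece : nat -> N -> bool) (ks : seq nat) : N -> bool :=
  fun s => has (fun k => piece k s) ks.

Lemma perfect_union lambda (ks : seq nat) (piece : nat -> N -> bool) (c : nat -> nat) :
  uniq ks -> (forall k, k \in ks -> perfect lambda (piece k) (c k)) ->
  {in ks &, forall i j, i != j -> disjoint_on (piece i) (piece j)} ->
  perfect lambda (union_of piece ks) (sumn (map c ks)).
Proof.
elim: ks => [|k ks IH] /=.
  by move=> _ _ _ s _; rewrite /pair_count /union_of /=; elim: (pairs n).
move=> /andP [k_ks uniq_ks] perf disj.
have tail j : j \in ks -> j \in k :: ks by move=> jks; rewrite inE jks orbT.
have perf_ks := IH uniq_ks (fun j jks => perf j (tail j jks))
  (fun i j iks jks => disj i j (tail i iks) (tail j jks)).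
have disj_k : disjoint_on (piece k) (union_of piece ks).
  move=> s bs; apply/negP => /andP [pk /hasP [j jks pj]].
  have kj : k != j by apply: contraNneq k_ks => ->.
  by move: (disj k j (mem_head _ _) (tail j jks) kj s bs); rewrite pk pj.
move=> s bs; rewrite [pair_count _ _](pair_count_union bs disj_k).
rewrite (perf k (mem_head _ _) s bs) (perf_ks s bs) /union_of /=.
have := disj_k s bs; rewrite /union_of.
by case: (piece k s); case: has => //= _; [rewrite addnA | rewrite addnCA].
Qed.

Lemma perfect_coloring_of_perfect lambda P c :
  perfect lambda P c -> 0 < c -> lambda + c < size (pairs n) ->
  perfect_coloring (@halved_adj n) [set y | P (syndrome (val y))]
    (lambda + c) (size (pairs n) - (lambda + c)) c (size (pairs n) - c).
Proof.
move=> perfP c_gt0 lt_size; set C := [set y | _].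
have count_in x : #|[set y | halved_adj x y & y \in C]| = pair_count P (syndrome (val x)).
  by rewrite -card_neighbours_syndrome; apply: eq_card => y; rewrite !inE.
have count_out x :
    #|[set y | halved_adj x y & y \notin C]| = size (pairs n) - pair_count P (syndrome (val x)).
  by rewrite -pair_count_compl -card_neighbours_syndrome; apply: eq_card => y; rewrite !inE.
have params x : pair_count P (syndrome (val x)) = if x \in C then lambda + c else c.
  by rewrite perfP ?inE //; exact: syndrome_bounded.
(* Nontriviality: the zero word has neighbours both inside and outside C. *)
have even0 : ~~ odd (weight ([ffun=> false] : word n)).
  by rewrite /weight (_ : [set i | _] = set0) ?cards0 //; apply/setP => i; rewrite !inE ffunE.
pose x0 : halved_vertex n := exist (fun w : word n => ~~ odd (weight w)) _ even0.
have [y0 y0C] : exists y, y \in C.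
  have [x0C | x0C] := boolP (x0 \in C); first by exists x0.
  have /card_gt0P [y] : 0 < #|[set y | halved_adj x0 y & y \in C]|.
    by rewrite count_in params (negbTE x0C).
  by rewrite inE => /andP [_ yC]; exists y.
have [y1 y1C] : exists y, y \notin C.
  have [x0C | x0C] := boolP (x0 \in C); last by exists x0.
  have /card_gt0P [y] : 0 < #|[set y | halved_adj x0 y & y \notin C]|.
    by rewrite count_out params x0C subn_gt0.
  by rewrite inE => /andP [_ yC]; exists y.
split; [|split; [|split]].
- by apply/eqP => C0; rewrite -C0 inE in y0C.
- by apply/eqP => CT; rewrite CT inE in y1C.
- by move=> x xC; rewrite count_in count_out params xC.
- by move=> x xC; rewrite count_in count_out params (negbTE xC).
Qed.

End PerfectSyndromeSets.

Definition columns : seq N :=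
  map N.of_nat [:: 0; 64; 128; 256; 512; 1024; 217; 568; 523; 430; 1328; 377;
                  1224; 1202; 575; 1123; 1452; 1519; 1386; 516; 557; 565; 462; 528].
Definition column (k : nat) : N := nth 0%num columns k.

Definition column_set (s : N) : bool := has (N.eqb s) columns.

Definition low_block (s : N) : bool := N.ltb s 64.

Definition column_shifts : seq N := map N.of_nat [:: 0; 1; 2; 3; 28; 29; 30; 31].
Definition block_shifts : seq N :=
  map (fun k => N.of_nat (64 * k)) [:: 9; 10; 11; 12; 13; 14; 15; 24; 25; 26; 27; 28; 29; 30; 31].

Definition piece (k : nat) : N -> bool :=
  if k < 8 then translate column_set (nth 0%num column_shifts k)
  else translate low_block (nth 0%num block_shifts (k - 8)).
Definition piece_weight (k : nat) : nat := if k < 8 then 3 else 8.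

(* An admissible c is 3a + 8b using the first a column pieces (a <= 8) and
   the first b block pieces (b <= 15); a = 3c mod 8 forces 8 | c - 3a. *)
Definition admissible (c : nat) : bool := (c \in [:: 3; 6; 8; 9; 11; 12]) || (14 <= c <= 128).
Definition column_pieces (c : nat) : nat := if c == 128 then 8 else (3 * c) %% 8.
Definition selection (c : nat) : seq nat :=
  iota 0 (column_pieces c) ++ iota 8 ((c - 3 * column_pieces c) %/ 8).

Definition perfectb (lambda : nat) (P : N -> bool) (c : nat) : bool :=
  all_vectors 11 (fun s => pair_count 24 column P s == (if P s then lambda + c else c)).

Lemma perfectbP lambda P c : perfectb lambda P c -> perfect 11 24 column lambda P c.
Proof. by move=> h s bs; apply/eqP; exact: (all_vectorsP h). Qed.

Lemma column_set_perfectb : perfectb 20 column_set 3.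
Proof. vm_cast_no_check (erefl true). Qed.

Lemma low_block_perfectb : perfectb 20 low_block 8.
Proof. vm_cast_no_check (erefl true). Qed.

Lemma pieces_disjointb :
  all (fun i => all (fun j => (i == j) ||
    all_vectors 11 (fun s => ~~ (piece i s && piece j s))) (iota 0 23)) (iota 0 23).
Proof. vm_cast_no_check (erefl true). Qed.

Lemma selectionb : all (fun c => admissible c ==>
  [&& uniq (selection c), all (fun k => k < 23) (selection c)
    & sumn (map piece_weight (selection c)) == c]) (iota 0 129).
Proof. vm_cast_no_check (erefl true). Qed.

Lemma size_pairs24 : size (pairs 24) = 276.
Proof. by vm_compute. Qed.

Lemma bounded_nth (s : seq N) k : all (fun t => N.ltb t 2048) s -> bounded 11 (nth 0%num s k).
Proof.
move=> /allP small; have [ks | ks] := ltnP k (size s); last by rewrite nth_default.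
by apply: lt_bounded; apply/N.ltb_lt/small/mem_nth.
Qed.

Lemma column_bounded k : bounded 11 (column k).
Proof. by apply: bounded_nth; vm_compute. Qed.

Lemma piece_perfect k : perfect 11 24 column 20 (piece k) (piece_weight k).
Proof.
rewrite /piece /piece_weight; case: (k < 8); apply: perfect_translate.
- exact: perfectbP column_set_perfectb.
- by apply: bounded_nth; vm_compute.
- exact: perfectbP low_block_perfectb.
- by apply: bounded_nth; vm_compute.
Qed.

Lemma pieces_disjoint :
  {in iota 0 23 &, forall i j, i != j -> disjoint_on 11 (piece i) (piece j)}.
Proof.
move=> i j i23 j23 ij s bs.
have := allP (allP pieces_disjointb i i23) j j23; rewrite (negbTE ij) => h.
exact: (all_vectorsP h).
Qed.

Lemma admissible_range c : admissible c -> 0 < c <= 128.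
Proof.
case/orP => [|/andP [c14 ->]]; last by rewrite andbT (leq_trans _ c14).
exact: (allP (isT : all (fun k => 0 < k <= 128) [:: 3; 6; 8; 9; 11; 12])).
Qed.

Lemma selection_perfect c :
  admissible c -> perfect 11 24 column 20 (union_of piece (selection c)) c.
Proof.
move=> adm; have /andP [_ c128] := admissible_range adm.
have := allP selectionb c; rewrite mem_iota ltnS c128 adm => /(_ isT) /and3P [uniq_sel sel23 /eqP sum_sel].
rewrite -[X in perfect _ _ _ _ _ X]sum_sel.
have in23 k : k \in selection c -> k \in iota 0 23 by move=> /(allP sel23); rewrite mem_iota.
apply: (perfect_union column_bounded) uniq_sel _ _ => [k _ | i j /in23 i23 /in23 j23]; first exact: piece_perfect.
exact: pieces_disjoint.
Qed.

Theorem theorem1 :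
  forall c : nat,
    c \in [:: 3; 6; 8; 9; 11; 12] \/ (14 <= c <= 128) ->
    exists C : {set halved_vertex 24},
      perfect_coloring (@halved_adj 24) C (20 + c) (256 - c) c (276 - c).
Proof.
move=> c hc.
have adm : admissible c by apply/orP.
have /andP [c_gt0 c128] := admissible_range adm.
exists [set y | union_of piece (selection c) (syndrome column (val y))].
have -> : 256 - c = size (pairs 24) - (20 + c) by rewrite size_pairs24 subnDA.
rewrite -size_pairs24.
apply: (perfect_coloring_of_perfect column_bounded (selection_perfect adm) c_gt0).
by rewrite size_pairs24 (@leq_ltn_trans (20 + 128)) // leq_add2l.
Qed.
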